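(* Let $\mathbf V$ be a variety of aperiodic monoids that does not contain the monoid $S(xyx)$. Suppose that $\mathbf V$ is not hereditarily finitely based. Then $\mathbf V$ satisfies either the identity $xyx\approx xyx^2$ or the identity $xyx\approx x^2yx$.
   Context: Monoid varieties are varieties of monoids considered as algebras with multiplication and a nullary operation for the identity element. A monoid is aperiodic if all its subgroups are trivial. A variety is hereditarily finitely based if all its subvarieties have a finite basis of identities. Let $F^1$ be the free monoid over a countably infinite alphabet; $S(xyx)$ is the Rees quotient monoid of $F^1$ over the ideal of all words that are not subwords of $xyx$. *)

From mathcomp Require Import all_boot.
Set Implicit Arguments. Unset Strict Implicit. Unset Printing Implicit Defensive.

Record Monoid := {
  mcarrier :> Type;
  mmul : mcarrier -> mcarrier -> mcarrier;
  mone : mcarrier;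
  mmulA : forall a b c, mmul a (mmul b c) = mmul (mmul a b) c;
  mmul1 : forall a, mmul mone a = a;
  mmul_1 : forall a, mmul a mone = a }.

(** Words over the countably infinite alphabet nat: elements of F^1. *)
Definition word := seq nat.
Definition identity := (word * word)%type.

Definition weval (M : Monoid) (phi : nat -> M) (w : word) : M :=
  foldr (fun a acc => mmul (phi a) acc) (mone M) w.

Definition msat (M : Monoid) (i : identity) : Prop :=
  forall phi : nat -> M, weval phi i.1 = weval phi i.2.

(** A monoid is aperiodic if all its subgroups are trivial: every subset G
    closed under multiplication which forms a group (with some identity e
    in G, not necessarily the identity of M) has at most one element. *)
Definition subgroup_of (M : Monoid) (G : M -> Prop) : Prop :=
  (forall a b, G a -> G b -> G (mmul a b)) /\
  exists e, G e /\
    (forall a, G a -> mmul e a = a /\ mmul a e = a) /\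
    (forall a, G a -> exists b, G b /\ mmul a b = e /\ mmul b a = e).

Definition aperiodic (M : Monoid) : Prop :=
  forall G : M -> Prop, subgroup_of G -> forall a b, G a -> G b -> a = b.

(** A monoid variety, given (Birkhoff) as the class of models of a set of
    identities. *)
Definition variety := identity -> Prop.

Definition in_var (V : variety) (M : Monoid) : Prop :=
  forall i, V i -> msat M i.

Definition var_sat (V : variety) (i : identity) : Prop :=
  forall M : Monoid, in_var V M -> msat M i.

Definition subvariety (U V : variety) : Prop :=
  forall M : Monoid, in_var U M -> in_var V M.

Definition finitely_based (V : variety) : Prop :=
  exists B : seq identity,
    forall M : Monoid, in_var V M <-> (forall i, i \in B -> msat M i).

Definition hereditarily_finitely_based (V : variety) : Prop :=
  forall U : variety, subvariety U V -> finitely_based U.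

Definition aperiodic_variety (V : variety) : Prop :=
  forall M : Monoid, in_var V M -> aperiodic M.

(** * The monoid S(xyx): Rees quotient of F^1 by the ideal of all words that
    are not subwords (factors) of xyx.  Letters: x = 0, y = 1.
    Elements: Some w with w a factor of xyx, and None = the zero (the ideal). *)
Definition xyx : word := [:: 0; 1; 0].

Definition rees_mul (a b : option word) : option word :=
  match a, b with
  | Some u, Some v => if infix (u ++ v) xyx then Some (u ++ v) else None
  | _, _ => None
  end.

Definition rees_ok (a : option word) : bool :=
  if a is Some w then infix w xyx else true.

Definition Sxyx_car := {a : option word | rees_ok a}.

Lemma rees_mul_ok (a b : Sxyx_car) : rees_ok (rees_mul (sval a) (sval b)).
Proof.
case: a => [[u|] ?] ; case: b => [[v|] ?] //=.
by case: ifP.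
Qed.

Definition Sxyx_mul (a b : Sxyx_car) : Sxyx_car :=
  exist _ (rees_mul (sval a) (sval b)) (rees_mul_ok a b).

Definition Sxyx_one : Sxyx_car := exist _ (Some [::]) (infix0s xyx).

Local Arguments infix : simpl never.
Lemma rees_mulA a b c : rees_mul a (rees_mul b c) = rees_mul (rees_mul a b) c.
Proof.
case: a => [u|] //; case: b => [v|] //; case: c => [w|] /=;
  last by case: ifP.
have L1 : infix (u ++ v ++ w) xyx -> infix (v ++ w) xyx.
  by move=> H; apply: (catl_infix (s := u)).
have L2 : infix (u ++ v ++ w) xyx -> infix (u ++ v) xyx.
  by move=> H; apply: (catr_infix (s := w)); rewrite -catA.
case: (boolP (infix (v ++ w) xyx)) => Hvw; case: (boolP (infix (u ++ v) xyx)) => Huv /=;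
  rewrite ?catA ?Hvw ?Huv //.
- by case: ifP => // H; case/negP: Huv; apply: L2; rewrite catA.
- by case: ifP => // H; case/negP: Hvw; apply: L1; rewrite catA.
Qed.

Lemma Sxyx_mulA (a b c : Sxyx_car) :
  Sxyx_mul a (Sxyx_mul b c) = Sxyx_mul (Sxyx_mul a b) c.
Proof. apply: val_inj => /=; exact: rees_mulA. Qed.

Lemma Sxyx_mul1 (a : Sxyx_car) : Sxyx_mul Sxyx_one a = a.
Proof. apply: val_inj; case: a => [[u|] /= Hu] //=; by rewrite Hu. Qed.

Lemma Sxyx_mul_1 (a : Sxyx_car) : Sxyx_mul a Sxyx_one = a.
Proof. apply: val_inj; case: a => [[u|] /= Hu] //=; by rewrite cats0 Hu. Qed.

Definition Sxyx : Monoid :=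
  {| mcarrier := Sxyx_car; mmul := Sxyx_mul; mone := Sxyx_one;
     mmulA := Sxyx_mulA; mmul1 := Sxyx_mul1; mmul_1 := Sxyx_mul_1 |}.

From Pilot Require Import Defs.
From mathcomp Require Import all_boot zify boolp.
Set Implicit Arguments. Unset Strict Implicit. Unset Printing Implicit Defensive.

(** Aperiodicity gives an identity x^n = x^(n+1) of V: otherwise every identity
    of V is balanced and the two-element group would lie in V.  Since S(xyx) is
    not in V, some identity of V fails in S(xyx); substituting for each letter
    the factor of xyx it is sent to yields an identity xyx = w of V with
    w <> xyx a word in x, y, and a case analysis on w shows that V satisfies
    xyx = xyxx, xyx = xxyx, xyx = xxy or xyx = yxx.

    It remains to see that the last two identities make V hereditarily
    finitely based.  Modulo xyx = xxy a word equals the product, in order of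
    first occurrence, of the powers of its letters, so an identity holds in a
    monoid satisfying xyx = xxy as soon as all its specialisations to two
    letters do; modulo x^n = x^(n+1) these are
    equivalent to identities between the finitely many words x^i y^j, y^j x^i
    with i, j <= n.  Hence every subvariety of V is defined by xyx = xxy,
    x^n = x^(n+1) and the two-letter identities of that finite list it
    satisfies.  The case xyx = yxx is dual, by reversing all words. *)

Local Arguments infix : simpl never.
Local Notation "x ** y" := (mmul x y) (at level 40, left associativity).

Definition mpow (M : Defs.Monoid) (x : M) (k : nat) : M := iter k (mmul x) (mone M).

Definition assign (M : Defs.Monoid) (a b : nat) (x y : M) : nat -> M :=
  fun c => if c == a then x else if c == b then y else mone M.

Section Powers.
Variable M : Defs.Monoid.
Implicit Types x : M.

Lemma mpowS x k : mpow x k.+1 = x ** mpow x k.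
Proof. by []. Qed.

Lemma mpowD x i j : mpow x (i + j) = mpow x i ** mpow x j.
Proof.
elim: i => [|i IHi]; first by rewrite mmul1.
by rewrite addSn /= IHi mmulA.
Qed.

Lemma mpowSr x k : mpow x k.+1 = mpow x k ** x.
Proof. by rewrite -addn1 mpowD /= mmul_1. Qed.

Lemma mpow_one k : mpow (mone M) k = mone M.
Proof. by elim: k => //= k ->; rewrite mmul1. Qed.

Lemma mpow_periodic x a d : mpow x a = mpow x (a + d) ->
  forall i m, a <= i -> mpow x (i + m * d) = mpow x i.
Proof.
move=> Had i m ai.
have step j : a <= j -> mpow x (j + d) = mpow x j.
  by move=> aj; rewrite -(subnK aj) -addnA mpowD -Had -mpowD.
elim: m => [|m IHm]; first by rewrite addn0.
by rewrite mulSn addnCA addnC step -?IHm //; lia.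
Qed.

Lemma mpow_stable x n : mpow x n = mpow x n.+1 ->
  forall i j, n <= i -> n <= j -> mpow x i = mpow x j.
Proof.
move=> Hn.
have base k : n <= k -> mpow x k = mpow x n.
  move=> nk; rewrite -(subnKC nk) -[k - n]muln1.
  by apply: (mpow_periodic (a := n)); rewrite ?addn1.
by move=> i j ni nj; rewrite base // [RHS]base.
Qed.

Lemma mpow_minn x n k : mpow x n = mpow x n.+1 -> mpow x k = mpow x (minn k n).
Proof.
by move=> Hn; case: (leqP k n) => // nk; apply: (mpow_stable Hn) => //; rewrite ltnW.
Qed.

Lemma mpow_shrink x n a d : mpow x n = mpow x n.+1 -> 0 < d ->
  mpow x a = mpow x (a + d) -> mpow x a = mpow x a.+1.
Proof.
move=> Hn d0 Had.
rewrite -(mpow_periodic Had n (leqnn a)) -[in RHS](mpow_periodic Had n (leqnSn a)).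
have nd : n <= n * d by rewrite leq_pmulr.
by apply: (mpow_stable Hn); lia.
Qed.

Lemma mpow_trivial x n k : mpow x n = mpow x n.+1 -> 0 < k ->
  mpow x k = mone M -> x = mone M.
Proof.
move=> Hn k0 xk.
have := mpow_shrink (a := 0) Hn k0; rewrite add0n xk => /(_ erefl).
by rewrite /= mmul_1 => <-.
Qed.

Lemma mpow_idem x n a b : mpow x n = mpow x n.+1 -> a < b -> a <= 1 ->
  mpow x a = mpow x b -> x ** x = x.
Proof.
move=> Hn ab a1 xab.
have Ha : mpow x a = mpow x a.+1.
  by apply: (mpow_shrink Hn (d := b - a)); rewrite ?subn_gt0 ?subnKC // ltnW.
have x21 : mpow x 2 = mpow x 1 by apply: (mpow_stable Ha); lia.
by move: x21; rewrite /= !mmul_1.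
Qed.

End Powers.

Definition subst (th : nat -> word) (w : word) : word := flatten (map th w).

Lemma subst_cons th a w : subst th (a :: w) = th a ++ subst th w.
Proof. by []. Qed.

Definition xy_word (w : word) : bool := all (fun c => c < 2) w.

Section Evaluation.
Variable M : Defs.Monoid.
Implicit Types phi : nat -> M.

Lemma weval_cat phi s t : weval phi (s ++ t) = weval phi s ** weval phi t.
Proof. by elim: s => [|a s IHs] /=; rewrite ?mmul1 // IHs mmulA. Qed.

Lemma weval_cons phi a w : weval phi (a :: w) = phi a ** weval phi w.
Proof. by []. Qed.

Lemma weval_nseq phi k c : weval phi (nseq k c) = mpow (phi c) k.
Proof. by elim: k => //= k ->. Qed.

Lemma weval_subst phi th w :
  weval phi (subst th w) = weval (fun a => weval phi (th a)) w.
Proof. by elim: w => //= a w <-; rewrite weval_cat. Qed.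

Lemma weval_eq_in phi psi w : {in w, phi =1 psi} -> weval phi w = weval psi w.
Proof.
elim: w => //= a w IHw eq_phi.
by rewrite eq_phi ?mem_head // IHw // => c cw; rewrite eq_phi // inE cw orbT.
Qed.

Lemma weval_all1 phi w : {in w, forall c, phi c = mone M} -> weval phi w = mone M.
Proof.
elim: w => //= c w IHw phi1.
by rewrite phi1 ?mem_head // mmul1 IHw // => d dw; rewrite phi1 // inE dw orbT.
Qed.

Lemma weval_pow_count phi a w : (forall c, c != a -> phi c = mone M) ->
  weval phi w = mpow (phi a) (count_mem a w).
Proof.
move=> phi1; elim: w => //= c w ->.
by case: eqVneq => [-> | /phi1 ->]; rewrite ?mmul1.
Qed.

Lemma weval_xy_word phi w : xy_word w -> weval phi w = weval (assign 0 1 (phi 0) (phi 1)) w.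
Proof. by move=> /allP w01; apply: weval_eq_in => -[|[|c]] // /w01. Qed.

Lemma weval_commute phi x s : {in s, forall c, phi c ** x = x ** phi c} ->
  weval phi s ** x = x ** weval phi s.
Proof.
elim: s => [|c s IHs] /= comm; first by rewrite mmul1 mmul_1.
rewrite -mmulA IHs => [|d ds]; last by rewrite comm // inE ds orbT.
by rewrite !mmulA comm ?mem_head.
Qed.

End Evaluation.

Lemma msat_powers (M : Defs.Monoid) a b :
  msat M (nseq a 0, nseq b 0) <-> forall x : M, mpow x a = mpow x b.
Proof.
split=> [Mab x | Mab phi]; last by rewrite /= !weval_nseq.
by have := Mab (fun=> x); rewrite /= !weval_nseq.
Qed.

Lemma msat_count_mem (M : Defs.Monoid) u v : msat M (u, v) ->
  forall a (x : M), mpow x (count_mem a u) = mpow x (count_mem a v).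
Proof.
move=> Muv a x; have := Muv (assign a a x x).
by rewrite /= !(weval_pow_count (a := a)) /assign ?eqxx // => c /negbTE ->.
Qed.

Lemma aperiodic_mpow (M : Defs.Monoid) (x : M) k d : aperiodic M -> 0 < d ->
  mpow x k = mpow x (k + d) -> mpow x k = mpow x k.+1.
Proof.
move=> apM d0 xkd.
(* {x^j | k <= j} is a cyclic group with identity x^(k d). *)
have per := mpow_periodic xkd.
have kkd : k <= k * d by rewrite leq_pmulr.
pose G y := exists2 j, k <= j & y = mpow x j.
apply: (apM G); [split | by exists k | by exists k.+1].
  by move=> _ _ [i ki ->] [j kj ->]; exists (i + j); rewrite ?mpowD //; lia.
exists (mpow x (k * d)); split; first by exists (k * d).
split=> _ [j kj ->].
  by rewrite -!mpowD addnC per.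
exists (mpow x (j * d.-1 + k * d)); split.
  by exists (j * d.-1 + k * d); first exact: leq_trans kkd (leq_addl _ _).
have e : j + (j * d.-1 + k * d) = k * d + j * d.
  by rewrite addnA -{1}(muln1 j) -mulnDr add1n prednK // addnC.
by rewrite -!mpowD e [_ + j]addnC e per.
Qed.

Definition Z2 : Defs.Monoid :=
  {| mcarrier := bool; mmul := addb; mone := false;
     mmulA := addbA; mmul1 := addFb; mmul_1 := addbF |}.

Lemma Z2_not_aperiodic : ~ aperiodic Z2.
Proof.
move=> /(_ (fun=> True)) apZ2.
have Z2_group : subgroup_of (M := Z2) (fun=> True).
  split=> //; exists false; split=> //; split=> b _; first exact: (conj (addFb b) (addbF b)).
  by exists b; rewrite /= addbb.
by have := apZ2 Z2_group false true I I.
Qed.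

Lemma msat_Z2_perm u v : perm_eq u v -> msat Z2 (u, v).
Proof.
have weval_Z2 (phi : nat -> Z2) w : weval phi w = odd (count phi w).
  by elim: w => //= a w ->; rewrite oddD oddb.
by move=> uv phi; rewrite /= !weval_Z2 (permP uv).
Qed.

Lemma aperiodic_variety_power_law V : aperiodic_variety V ->
  exists n, var_sat V (nseq n 0, nseq n.+1 0).
Proof.
move=> apV.
have [[k [l [kl Vkl]]] | no_power_law] :=
  pselect (exists k l, k < l /\ var_sat V (nseq k 0, nseq l 0)).
  exists k => M VM; apply/msat_powers => x.
  apply: (@aperiodic_mpow M x k (l - k) (apV M VM)); first by rewrite subn_gt0.
  by rewrite subnKC ?(ltnW kl) //; exact: (msat_powers M k l).1 (Vkl M VM) x.
case: Z2_not_aperiodic; apply: apV => -[u v] Vuv.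
apply: msat_Z2_perm; apply/allP => a _; apply/eqP.
case: (ltngtP (count_mem a u) (count_mem a v)) => // ineq; case: no_power_law.
  by exists (count_mem a u), (count_mem a v); split=> // M VM; apply/msat_powers;
    apply: msat_count_mem (VM _ Vuv) a.
exists (count_mem a v), (count_mem a u); split=> // M VM; apply/msat_powers => x.
by rewrite (msat_count_mem (VM _ Vuv)).
Qed.

Lemma var_sat_sym V u v : var_sat V (u, v) -> var_sat V (v, u).
Proof. by move=> Vuv M VM phi; rewrite (Vuv M VM). Qed.

Lemma var_sat_subst V th u v : var_sat V (u, v) -> var_sat V (subst th u, subst th v).
Proof. by move=> Vuv M VM phi; rewrite /= !weval_subst (Vuv M VM). Qed.

Lemma var_sat_context V p q u v :
  var_sat V (u, v) -> var_sat V (p ++ u ++ q, p ++ v ++ q).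
Proof. by move=> Vuv M VM phi; rewrite /= !weval_cat (Vuv M VM). Qed.

(* The zero of S(xyx) is sent to yy, which is not a factor of xyx. *)
Definition Sxyx_word (s : Sxyx) : word := if sval s is Some t then t else [:: 1; 1].

Lemma Sxyx_word_xy (s : Sxyx) : xy_word (Sxyx_word s).
Proof.
case: s => -[t /= t_xyx|] //; apply/allP => c /(mem_infix t_xyx).
by rewrite !inE => /or3P [] /eqP ->.
Qed.

Lemma subst_xy th w : (forall a, xy_word (th a)) -> xy_word (subst th w).
Proof.
move=> th_xy; elim: w => //= a w IHw.
by rewrite subst_cons /xy_word all_cat; apply/andP; split; [apply: th_xy | apply: IHw].
Qed.

Lemma Sxyx_weval (phi : nat -> Sxyx) w :
  sval (weval phi w) =
  let t := subst (Sxyx_word \o phi) w in if infix t xyx then Some t else None.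
Proof.
elim: w => //= a w IHw; rewrite subst_cons IHw /=.
set t := subst _ w; case: (phi a) => [[s|] s_ok] //=; rewrite /Sxyx_word /=.
case: (boolP (infix t xyx)) => [// | /negbTE t_xyx] /=.
by case: ifP => // /catl_infix; rewrite t_xyx.
Qed.

Lemma Sxyx_notin_factor_identity V : ~ in_var V Sxyx ->
  exists t s, [/\ infix t xyx, t != s, xy_word s & var_sat V (t, s)].
Proof.
move=> /existsNP [[u v] /not_implyP [Vuv /existsNP [phi uv]]].
set th := Sxyx_word \o phi.
have Vth : var_sat V (subst th u, subst th v).
  by apply: var_sat_subst => M VM; apply: VM.
have th_xy w : xy_word (subst th w) by apply: subst_xy => a; apply: Sxyx_word_xy.
have {}uv : sval (weval phi u) <> sval (weval phi v) by move=> /val_inj.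
rewrite !Sxyx_weval /= -/th in uv.
case u_xyx: (infix (subst th u) xyx) in uv.
  exists (subst th u), (subst th v); split=> //.
  by apply/eqP => uv_eq; apply: uv; rewrite -uv_eq u_xyx.
case v_xyx: (infix (subst th v) xyx) in uv => //.
exists (subst th v), (subst th u); split=> //; last exact: var_sat_sym.
by apply/eqP => uv_eq; move: u_xyx; rewrite -uv_eq v_xyx.
Qed.

Lemma Sxyx_notin_xyx_identity V : ~ in_var V Sxyx ->
  exists w, [/\ w != xyx, xy_word w & var_sat V (xyx, w)].
Proof.
move=> /Sxyx_notin_factor_identity [t [s [/infixP [p [q xyxE]] ts s_xy Vts]]].
exists (p ++ s ++ q); split; last by rewrite xyxE; apply: var_sat_context.
- rewrite xyxE; apply: contra ts => /eqP /(congr1 (drop (size p))).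
  rewrite !drop_size_cat // => sq_tq.
  have /addIn st : size s + size q = size t + size q by rewrite -!size_cat sq_tq.
  by move/eqP: sq_tq; rewrite eqseq_cat // eq_sym => /andP [].
- have : xy_word (p ++ t ++ q) by rewrite -xyxE.
  by move: s_xy; rewrite /xy_word !all_cat => -> /and3P [-> _ ->].
Qed.

Definition xxy : word := [:: 0; 0; 1].
Definition yxx : word := [:: 1; 0; 0].
Definition xyxx : word := [:: 0; 1; 0; 0].
Definition xxyx : word := [:: 0; 0; 1; 0].

Lemma xy_word_no_y w : xy_word w -> count_mem 1 w = 0 -> w = nseq (size w) 0.
Proof.
elim: w => //= c w IHw /andP [c2 w_xy].
by case: c c2 => [|[|c]] //= _ /(IHw w_xy) {1}->.
Qed.

Lemma xy_word_one_y w : xy_word w -> count_mem 1 w = 1 ->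
  exists a b, w = nseq a 0 ++ 1 :: nseq b 0.
Proof.
elim: w => //= c w IHw /andP [c2 w_xy].
case: c c2 => [|[|c]] //= _ => [/(IHw w_xy) [a [b ->]] | [/(xy_word_no_y w_xy) ->]].
  by exists a.+1, b.
by exists 0, (size w).
Qed.

Lemma var_sat_xxyx_of_idem V : (forall M, in_var V M -> forall x : M, x ** x = x) ->
  var_sat V (xyx, xxyx).
Proof. by move=> idem M VM phi; rewrite /= [in RHS]mmulA idem. Qed.

Lemma xyx_one_y_cases V n a b : var_sat V (nseq n 0, nseq n.+1 0) -> (a, b) != (1, 1) ->
  var_sat V (xyx, nseq a 0 ++ 1 :: nseq b 0) ->
  [\/ var_sat V (xyx, xxy), var_sat V (xyx, yxx),
      var_sat V (xyx, xyxx) | var_sat V (xyx, xxyx)].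
Proof.
move=> Vn ab11 Vab.
have xn M (VM : in_var V M) : forall x : M, mpow x n = mpow x n.+1.
  exact/msat_powers/Vn.
have xyx_ab M (VM : in_var V M) (x y : M) : x ** (y ** x) = mpow x a ** (y ** mpow x b).
  by have := Vab M VM (assign 0 1 x y); rewrite /= weval_cat /= !weval_nseq /= mmul_1.
have x2_ab M (VM : in_var V M) (x : M) : mpow x 2 = mpow x (a + b).
  by have := msat_count_mem (Vab M VM) 0 x; rewrite count_cat /= !count_nseq /= !mul1n.
have [ab1 | [ab2 | ab3]] : a + b <= 1 \/ a + b = 2 \/ 2 < a + b by lia.
- apply: Or44; apply: var_sat_xxyx_of_idem => M VM x.
  by apply: (mpow_idem (xn M VM x) _ ab1 (esym (x2_ab M VM x))); lia.
- have [[a0 b2] | [a2 b0]] : a = 0 /\ b = 2 \/ a = 2 /\ b = 0.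
    by move: ab11; rewrite xpair_eqE => /nandP [] /eqP ?; lia.
  + by apply: Or42 => M VM phi; rewrite /= !mmul_1 xyx_ab // a0 b2 /= mmul1 mmul_1.
  + by apply: Or41 => M VM phi; rewrite /= !mmul_1 xyx_ab // a2 b0 /= !mmul_1 mmulA.
- have x_ge2 M (VM : in_var V M) (x : M) i j : 2 <= i -> 2 <= j -> mpow x i = mpow x j.
    apply: mpow_stable; apply: (mpow_shrink (xn M VM x) (d := a + b - 2)).
      by rewrite subn_gt0.
    by rewrite subnKC ?x2_ab // ltnW.
  have [a2 | a1] := leqP 2 a.
  + apply: Or44 => M VM phi; rewrite /= !mmul_1 !xyx_ab // [in RHS]mmulA -mpowS.
    by rewrite (x_ge2 M VM _ a.+1 a) // ltnW.
  + apply: Or43 => M VM phi; rewrite /= !mmul_1 [in RHS](mmulA (phi 1)) [RHS]mmulA.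
    rewrite xyx_ab // -!mmulA -mpowSr.
    by rewrite (x_ge2 M VM _ b.+1 b) //; lia.
Qed.

Lemma xyx_identity_cases V n w : var_sat V (nseq n 0, nseq n.+1 0) ->
  w != xyx -> xy_word w -> var_sat V (xyx, w) ->
  [\/ var_sat V (xyx, xxy), var_sat V (xyx, yxx),
      var_sat V (xyx, xyxx) | var_sat V (xyx, xxyx)].
Proof.
move=> Vn w_xyx w_xy Vw.
have [w_1y | w_y] := eqVneq (count_mem 1 w) 1.
  have [a [b wE]] := xy_word_one_y w_xy w_1y; rewrite wE in Vw w_xyx.
  by apply: (xyx_one_y_cases Vn _ Vw); apply/eqP => -[a1 b1]; rewrite a1 b1 in w_xyx.
apply: Or44; apply: var_sat_xxyx_of_idem => M VM y.
have yn : mpow y n = mpow y n.+1 by move: y; apply/msat_powers/Vn.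
have /= y_w := msat_count_mem (Vw M VM) 1 y.
have [y0 | y2] : count_mem 1 w < 1 \/ 1 < count_mem 1 w by lia.
  exact: mpow_idem yn y0 (ltnW y0) (esym y_w).
exact: mpow_idem yn y2 (leqnn 1) y_w.
Qed.

(* Unlike [undup], keeps the first occurrence of each letter. *)
Definition undupl (w : word) : word := rev (undup (rev w)).

Lemma mem_undupl w : undupl w =i w.
Proof. by move=> c; rewrite mem_rev mem_undup mem_rev. Qed.

Lemma undupl_uniq w : uniq (undupl w).
Proof. by rewrite rev_uniq undup_uniq. Qed.

Lemma undupl_cons a w : undupl (a :: w) = a :: [seq c <- undupl w | c != a].
Proof. by rewrite /undupl rev_cons undup_rcons rev_rcons filter_rev. Qed.

Lemma filter_undupl p w : filter p (undupl w) = undupl (filter p w).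
Proof. by rewrite /undupl filter_rev filter_undup filter_rev. Qed.

Lemma index_insert_lt (T : eqType) (s1 s2 : seq T) a x y : x != a -> y != a ->
  index x (s1 ++ s2) < index y (s1 ++ s2) -> index x (s1 ++ a :: s2) < index y (s1 ++ a :: s2).
Proof.
move=> xa ya; rewrite !index_cat /= eq_sym (negbTE xa) eq_sym (negbTE ya).
have := index_mem x s1; have := index_mem y s1.
by case: (x \in s1); case: (y \in s1) => /= ys1 xs1; lia.
Qed.

Section Products.
Variable M : Defs.Monoid.
Implicit Types h : nat -> M.

Lemma weval_uniq_supp1 h b s : uniq s -> {in s, forall c, c != b -> h c = mone M} ->
  (b \notin s -> h b = mone M) -> weval h s = h b.
Proof.
elim: s => [_ _ -> //|c s IHs] /= /andP [cs us] h1 hb.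
have h1s : {in s, forall d, d != b -> h d = mone M}.
  by move=> d ds; apply: h1; rewrite inE ds orbT.
case: (eqVneq c b) => [c_b | cb]; first subst b.
  rewrite weval_all1 ?mmul_1 // => d ds; apply: h1s => //.
  by apply: contraNneq cs => <-.
rewrite h1 ?mem_head // mmul1 IHs // => bs; apply: hb.
by rewrite inE negb_or eq_sym cb.
Qed.

Lemma weval_uniq_supp2 h a b s : a != b -> uniq s ->
  (forall c, c != a -> c != b -> h c = mone M) ->
  (a \notin s -> h a = mone M) -> (b \notin s -> h b = mone M) ->
  weval h s = if index a s < index b s then h a ** h b else h b ** h a.
Proof.
move=> ab; elim: s => [_ _ -> // -> //|c s IHs] /=; first by rewrite mmul1.
move=> /andP [cs us] h1 ha hb.
case: (eqVneq c a) => [c_a | ca]; last case: (eqVneq c b) => [c_b | cb].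
- subst a; rewrite (negbTE ab) (weval_uniq_supp1 (b := b)) //.
    by move=> d ds db; apply: h1 db; apply: contraNneq cs => <-.
  by move=> bs; apply: hb; rewrite inE negb_or eq_sym ab.
- subst b; rewrite ltn0 (weval_uniq_supp1 (b := a)) //.
    by move=> d ds da; apply: h1 da _; apply: contraNneq cs => <-.
  by move=> as_; apply: ha; rewrite inE negb_or eq_sym ca.
- rewrite h1 // mmul1 ltnS IHs // => [as_ | bs].
    by apply: ha; rewrite inE negb_or eq_sym ca.
  by apply: hb; rewrite inE negb_or eq_sym cb.
Qed.

Lemma weval_perm_commute h s t : uniq s -> perm_eq s t ->
  (forall a b, a \in s -> b \in s -> index a s < index b s -> index b t < index a t ->
     h a ** h b = h b ** h a) ->
  weval h s = weval h t.
Proof.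
elim: s t => [t _ | a s IHs t]; first by rewrite perm_sym => /perm_nilP ->.
move=> /andP [a_s us] st inv.
have t_a : a \in t by rewrite -(perm_mem st) mem_head.
move: st inv; case/splitPr: t_a => t1 t2 st inv.
have st' : perm_eq s (t1 ++ t2).
  by rewrite -(perm_cons a) perm_sym -(perm_catCA t1 [:: a] t2) perm_sym.
have a_t1 : a \notin t1.
  by apply: contra a_s; rewrite (perm_mem st') mem_cat => ->.
have a_t1_comm : weval h t1 ** h a = h a ** weval h t1.
  apply: weval_commute => b bt1; symmetry; apply: inv; rewrite ?mem_head //.
  - by rewrite (perm_mem st) mem_cat bt1.
  - by rewrite /= eqxx; case: eqVneq => // ab; rewrite ab bt1 in a_t1.
  - by rewrite !index_cat bt1 (negbTE a_t1) /= eqxx addn0 index_mem.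
rewrite weval_cat /= mmulA a_t1_comm -mmulA -weval_cat (IHs _ us st') // => b c bs cs bc cb.
have [ba ca] : b != a /\ c != a by split; apply: contraNneq a_s => <-.
apply: inv; rewrite ?inE ?bs ?cs ?orbT //=; first by rewrite !(eq_sym a) (negbTE ba) (negbTE ca).
exact: index_insert_lt.
Qed.

End Products.

Lemma msat_xyx_xxy (M : Defs.Monoid) :
  msat M (xyx, xxy) <-> forall x y : M, x ** (y ** x) = x ** (x ** y).
Proof.
split=> [Mxxy x y | xxy phi]; last by rewrite /= !mmul_1.
by have := Mxxy (assign 0 1 x y); rewrite /= !mmul_1.
Qed.

Section XyxXxy.
Variable M : Defs.Monoid.
Hypothesis xyx_xxy : forall x y : M, x ** (y ** x) = x ** (x ** y).
Implicit Types phi : nat -> M.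

Lemma weval_gather phi a w (p : M) :
  phi a ** (p ** weval phi w) =
  mpow (phi a) (count_mem a w).+1 ** (p ** weval phi [seq c <- w | c != a]).
Proof.
elim: w p => [|c w IHw] p; first by rewrite /= !mmul_1.
case: (eqVneq c a) => [-> | ca].
  have -> : count_mem a (a :: w) = (count_mem a w).+1 by rewrite /= eqxx.
  have -> : [seq d <- a :: w | d != a] = [seq d <- w | d != a] by rewrite /= eqxx.
  have swap : phi a ** (p ** (phi a ** weval phi w)) =
              phi a ** ((phi a ** p) ** weval phi w).
    by rewrite !mmulA -(mmulA (phi a) p) xyx_xxy !mmulA.
  by rewrite weval_cons swap IHw [in RHS]mpowSr !mmulA.
have -> : count_mem a (c :: w) = count_mem a w by rewrite /= (negbTE ca).
have -> : [seq d <- c :: w | d != a] = c :: [seq d <- w | d != a] by rewrite /= ca.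
by rewrite !weval_cons (mmulA p) IHw !mmulA.
Qed.

Lemma weval_undupl phi w :
  weval phi w = weval (fun c => mpow (phi c) (count_mem c w)) (undupl w).
Proof.
elim: {w}_.+1 {-2}w (ltnSn (size w)) => // m IHm [|a w] //= w_m.
have := weval_gather phi a w (mone M); rewrite !mmul1 => ->.
rewrite undupl_cons weval_cons eqxx add1n filter_undupl IHm; last first.
  by rewrite size_filter (leq_ltn_trans (count_size _ _)).
congr (_ ** _); apply: weval_eq_in => c.
rewrite mem_undupl mem_filter => /andP [ca _].
rewrite count_filter eq_sym (negbTE ca) add0n; congr mpow.
by apply: eq_count => d /=; case: eqVneq => // ->.
Qed.

Lemma weval_assign2 a b (x y : M) w : a != b ->
  weval (assign a b x y) w =
  if index a (undupl w) < index b (undupl w)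
  then mpow x (count_mem a w) ** mpow y (count_mem b w)
  else mpow y (count_mem b w) ** mpow x (count_mem a w).
Proof.
move=> ab; rewrite weval_undupl (weval_uniq_supp2 ab (undupl_uniq w)).
- by rewrite /assign eqxx eq_sym (negbTE ab) eqxx.
- by move=> c /negbTE ca /negbTE cb; rewrite /assign ca cb mpow_one.
- by rewrite mem_undupl => /count_memPn ->.
- by rewrite mem_undupl => /count_memPn ->.
Qed.

Variable n : nat.
Hypothesis xn : forall x : M, mpow x n = mpow x n.+1.

Lemma msat_of_assign2 u v :
  (forall a b, a != b -> forall x y : M,
     weval (assign a b x y) u = weval (assign a b x y) v) ->
  msat M (u, v).
Proof.
move=> uv2 phi.
have uv1 c (x : M) : mpow x (count_mem c u) = mpow x (count_mem c v).
  have := uv2 c c.+1 (negbT (ltn_eqF (ltnSn c))) x (mone M).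
  by rewrite !(weval_pow_count (a := c)) /assign ?eqxx // => d /negbTE ->; case: ifP.
have [uv | /existsNP [c /eqP c_uv]] := pselect (u =i v); last first.
  (* A letter occurring on one side only gives x^k = 1 with k > 0, so M is trivial. *)
  suff trivM (x : M) : x = mone M by rewrite /= (trivM (weval phi u)) (trivM (weval phi v)).
  have pos s : (0 < count_mem c s) = (c \in s) by rewrite -has_count has_pred1.
  have [[cu0 cv] | [cv0 cu]] : count_mem c u = 0 /\ 0 < count_mem c v \/
                               count_mem c v = 0 /\ 0 < count_mem c u.
    by move: c_uv; rewrite -!pos; do 2 case: posnP => ?; auto.
  - by apply: (mpow_trivial (xn x) cv); rewrite -uv1 cu0.
  - by apply: (mpow_trivial (xn x) cu); rewrite uv1 cv0.
rewrite /= (weval_undupl phi u) (weval_undupl phi v).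
rewrite (@weval_eq_in _ _ (fun c => mpow (phi c) (count_mem c u)) (undupl v)); last first.
  by move=> c _; rewrite uv1.
apply: weval_perm_commute; first exact: undupl_uniq.
  by apply: uniq_perm; rewrite ?undupl_uniq // => c; rewrite !mem_undupl uv.
move=> a b _ _ ab_u ba_v; have a_b : a != b by apply: contraTneq ab_u => ->; rewrite ltnn.
have := uv2 a b a_b (phi a) (phi b).
by rewrite !weval_assign2 // ab_u ltnNge (ltnW ba_v) /= -!uv1.
Qed.

End XyxXxy.

Definition nf2 n a b (w : word) : word :=
  let i := minn (count_mem a w) n in let j := minn (count_mem b w) n in
  if index a (undupl w) < index b (undupl w)
  then nseq i 0 ++ nseq j 1 else nseq j 1 ++ nseq i 0.

Definition two_letter_nfs n : seq word :=
  [seq nseq i 0 ++ nseq j 1 | i <- iota 0 n.+1, j <- iota 0 n.+1] ++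
  [seq nseq j 1 ++ nseq i 0 | i <- iota 0 n.+1, j <- iota 0 n.+1].

Definition two_letter_identities n : seq identity :=
  [seq (p, q) | p <- two_letter_nfs n, q <- two_letter_nfs n].

Lemma nf2_two_letter n a b w : nf2 n a b w \in two_letter_nfs n.
Proof.
have min_iota k : minn k n \in iota 0 n.+1 by rewrite mem_iota ltnS geq_minr.
rewrite /nf2 mem_cat; case: ifP => _; apply/orP; [left | right].
  exact: (allpairs_f (fun i j => nseq i 0 ++ nseq j 1)).
exact: (allpairs_f (fun i j => nseq j 1 ++ nseq i 0)).
Qed.

Lemma nf2_xy n a b w : xy_word (nf2 n a b w).
Proof.
rewrite /nf2; case: ifP => _; apply/allP => c;
  by rewrite mem_cat !mem_nseq => /orP [] /andP [_ /eqP ->].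
Qed.

Lemma weval_nf2 (M : Defs.Monoid) n a b (x y : M) w :
  (forall x y : M, x ** (y ** x) = x ** (x ** y)) -> (forall x : M, mpow x n = mpow x n.+1) ->
  a != b -> weval (assign a b x y) w = weval (assign 0 1 x y) (nf2 n a b w).
Proof.
move=> xyx_xxy xn ab; rewrite weval_assign2 // /nf2.
by case: ifP => _; rewrite weval_cat !weval_nseq /= -!(mpow_minn _ (xn _)).
Qed.

Theorem xyx_xxy_hfb V n : var_sat V (nseq n 0, nseq n.+1 0) -> var_sat V (xyx, xxy) ->
  hereditarily_finitely_based V.
Proof.
move=> Vn Vxxy U UV.
exists [:: (nseq n 0, nseq n.+1 0), (xyx, xxy)
         & [seq i <- two_letter_identities n | `[< var_sat U i >]]] => M.
split=> [UM i | MB].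
  rewrite !inE mem_filter => /or3P [/eqP -> | /eqP -> | /andP [/asboolP Ui _]].
  - exact: Vn (UV M UM).
  - exact: Vxxy (UV M UM).
  - exact: Ui.
have Mn : forall x : M, mpow x n = mpow x n.+1 by apply/msat_powers/MB; rewrite inE eqxx.
have Mxxy : forall x y : M, x ** (y ** x) = x ** (x ** y).
  by apply/msat_xyx_xxy/MB; rewrite !inE eqxx orbT.
move=> [u v] Uuv; apply: (msat_of_assign2 Mxxy Mn) => a b ab x y.
rewrite !(weval_nf2 _ _ _ Mxxy Mn ab).
suff : msat M (nf2 n a b u, nf2 n a b v) by apply.
apply: MB.
rewrite !in_cons mem_filter (allpairs_f pair (nf2_two_letter _ _ _ _) (nf2_two_letter _ _ _ _)).
apply/or3P; apply: Or33; rewrite andbT; apply/asboolP => N UN psi /=.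
have Nn := (msat_powers N n n.+1).1 (Vn N (UV N UN)).
have Nxxy := (msat_xyx_xxy N).1 (Vxxy N (UV N UN)).
rewrite !(weval_xy_word psi (nf2_xy _ _ _ _)) -!(weval_nf2 _ _ _ Nxxy Nn ab).
exact: UN _ Uuv (assign a b (psi 0) (psi 1)).
Qed.

Section Converse.
Variable M : Defs.Monoid.

Definition conv_mul (x y : M) : M := y ** x.

Lemma conv_mulA (x y z : M) : conv_mul x (conv_mul y z) = conv_mul (conv_mul x y) z.
Proof. by rewrite /conv_mul mmulA. Qed.

Lemma conv_mul1 (x : M) : conv_mul (mone M) x = x.
Proof. exact: mmul_1. Qed.

Lemma conv_mul_1 (x : M) : conv_mul x (mone M) = x.
Proof. exact: mmul1. Qed.

Definition converse : Defs.Monoid :=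
  {| mcarrier := M; mmul := conv_mul; mone := mone M;
     mmulA := conv_mulA; mmul1 := conv_mul1; mmul_1 := conv_mul_1 |}.

End Converse.

Definition rev_identity (i : identity) : identity := (rev i.1, rev i.2).

Definition rev_variety (V : variety) : variety := fun i => V (rev_identity i).

Lemma rev_identityK : involutive rev_identity.
Proof. by case=> u v; rewrite /rev_identity /= !revK. Qed.

Lemma weval_converse (M : Defs.Monoid) (phi : nat -> M) w :
  weval (M := converse M) phi w = weval phi (rev w).
Proof.
elim: w => //= a w ->.
by rewrite rev_cons -cats1 weval_cat /= mmul_1.
Qed.

Lemma msat_converse (M : Defs.Monoid) i : msat (converse M) i <-> msat M (rev_identity i).
Proof. by split=> Mi phi; move: (Mi phi); rewrite !weval_converse. Qed.

Lemma in_var_converse V (M : Defs.Monoid) :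
  in_var (rev_variety V) M <-> in_var V (converse M).
Proof.
split=> VM i Vi; first by apply/msat_converse; apply: VM; rewrite /rev_variety rev_identityK.
by rewrite -[i]rev_identityK; apply/msat_converse/VM.
Qed.

Lemma in_var_converseK V (M : Defs.Monoid) : in_var V (converse (converse M)) <-> in_var V M.
Proof.
have convK i : msat (converse (converse M)) i <-> msat M i.
  by rewrite msat_converse msat_converse rev_identityK.
by split=> VM i Vi; apply/convK/VM.
Qed.

Lemma var_sat_rev V i : var_sat V (rev_identity i) -> var_sat (rev_variety V) i.
Proof. by move=> Vi M /in_var_converse /Vi /msat_converse; rewrite rev_identityK. Qed.

Lemma hfb_rev_variety V :
  hereditarily_finitely_based (rev_variety V) -> hereditarily_finitely_based V.
Proof.
move=> hfbV U UV.
have [B defB] : finitely_based (rev_variety U).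
  by apply: hfbV => M /in_var_converse /UV VM; apply/in_var_converse.
exists (map rev_identity B) => M.
rewrite -in_var_converseK -in_var_converse defB; split=> MB i.
  by move=> /mapP [j Bj ->]; apply/msat_converse/MB.
by move=> Bi; apply/msat_converse/MB/map_f.
Qed.

Theorem xyx_yxx_hfb V n : var_sat V (nseq n 0, nseq n.+1 0) -> var_sat V (xyx, yxx) ->
  hereditarily_finitely_based V.
Proof.
move=> Vn Vyxx; apply: hfb_rev_variety; apply: (xyx_xxy_hfb (n := n)).
  by apply: var_sat_rev; rewrite /rev_identity !rev_nseq.
exact: var_sat_rev.
Qed.

Theorem lemma2p1 (V : variety) :
  aperiodic_variety V ->
  ~ in_var V Sxyx ->
  ~ hereditarily_finitely_based V ->
  var_sat V ([:: 0; 1; 0], [:: 0; 1; 0; 0]) \/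
  var_sat V ([:: 0; 1; 0], [:: 0; 0; 1; 0]).
Proof.
move=> apV Sxyx_notin not_hfb.
have [n Vn] := aperiodic_variety_power_law apV.
have [w [w_xyx w_xy Vw]] := Sxyx_notin_xyx_identity Sxyx_notin.
case: (xyx_identity_cases Vn w_xyx w_xy Vw) => [Vxxy | Vyxx | Vxyxx | Vxxyx].
- by case: not_hfb; apply: xyx_xxy_hfb Vn Vxxy.
- by case: not_hfb; apply: xyx_yxx_hfb Vn Vyxx.
- by left.
- by right.
Qed.
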